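(* Let $a_0=0$ and let $a_1<a_2<\cdots$ be the increasing enumeration of the set $\{m\ge1:\ c_m=1\}$ (so that, for $m\ge1$, $c_m=1$ if and only if $m=a_n$ for some $n>0$). Then $a_1=1$, $a_2=2$, $a_3=7$, and for all $n\ge 1$: $$a_{4n}=a_{4n-1}+1,\quad a_{4n+1}=a_{4n-1}+2,\quad a_{4n+2}=a_{4n-1}+3,\quad a_{8n+3}=a_{8n}+7,\quad a_{8n+7}=4a_{4n+3}+3.$$
   Context: For $n\in\mathbb{N}$ let $s_2(n)$ be the sum of the binary digits of $n$ and $t_n=s_2(n)\bmod 2$ (the Prouhet–Thue–Morse sequence). Let $F(X)=\sum_{n\ge1}t_nX^n\in\mathbb{F}_2[[X]]$ and let $G(X)=\sum_{n\ge1}c_nX^n\in\mathbb{F}_2[[X]]$ be its compositional inverse, i.e. $F(G(X))=G(F(X))=X$. The $c_n$ are identified with integers in $\{0,1\}$. *)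

From mathcomp Require Import all_boot all_order all_algebra.
Set Implicit Arguments. Unset Strict Implicit. Unset Printing Implicit Defensive.
Import GRing.Theory.
Local Open Scope ring_scope.

Definition fps := nat -> 'F_2.

(* s_2(n): the sum of the binary digits of n (bit i of n is odd (n %/ 2^i);
   all bits of position >= n are zero). *)
Definition s2 (n : nat) : nat := (\sum_(i < n.+1) odd (n %/ 2 ^ i))%N.

Definition tm (n : nat) : nat := (s2 n %% 2)%N.

Definition Fser : fps := fun n => if n == 0%N then 0 else (tm n)%:R.

Definition trunc (B : fps) (n : nat) : {poly 'F_2} := \poly_(i < n.+1) B i.

(* Coefficient of X^n in the composition A(B(X)), for B with B 0 = 0:
   [X^n] A(B) = sum_{k=0}^{n} a_k [X^n] B^k. *)
Definition comp (A B : fps) : fps :=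
  fun n => \sum_(k < n.+1) A k * ((trunc B n) ^+ k)`_n.

Definition Xser : fps := fun n => if n == 1%N then 1 else 0.

Definition comp_inverse (F G : fps) : Prop :=
  G 0%N = 0 /\ (forall n, comp F G n = Xser n) /\ (forall n, comp G F n = Xser n).

Definition enumerates (c : fps) (a : nat -> nat) : Prop :=
  a 0%N = 0%N /\ (forall n, (a n < a n.+1)%N) /\
  (forall m, (1 <= m)%N -> (c m = 1 <-> exists2 n, (0 < n)%N & a n = m)).

From Pilot Require Import Defs.
From mathcomp Require Import all_boot all_order all_algebra.
From mathcomp Require Import ring zify.
Set Implicit Arguments. Unset Strict Implicit. Unset Printing Implicit Defensive.
Import GRing.Theory.
Local Open Scope ring_scope.

(* Since t_(2n) = t_n and t_(2n+1) = 1 + t_n, over F_2 the series F satisfies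
     F(X) = (1 + X) F(X^2) + X / (1 + X^2),  with F(X^2) = F(X)^2,
   i.e. (1 + X)^3 F^2 + (1 + X^2) F + X = 0.  Substituting X := G and
   multiplying by 1 + X + X G yields X^3 G^4 + (1 + X) G + X + X^3 = 0, that is
   c_1 = c_2 = 1, c_3 = 0 and c_m = c_(m-1) + [4 | m - 3] c_((m-3)/4) for m >= 4.
   Hence c is constant on each block 4q+3, ..., 4q+6, with value c_1 + ... + c_q.
   The explicit sequence a_n = n (n < 3), a_(4j+3+r) = 4 a_(2j+1) + 3 + r (r < 4)
   is increasing with a_(2j+2) = a_(2j+1) + 1, so the number of its terms in
   [1, q] is odd exactly when q = a_(2j+1); by induction its range is therefore
   the support of c, and the recurrences are read off its definition. *)

Section CongruenceModXn.
Variables (R : comNzRingType) (N : nat).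

Definition congX (p q : {poly R}) := forall i, (i < N)%N -> p`_i = q`_i.

Lemma congX_sym p q : congX p q -> congX q p.
Proof. by move=> h i hi; rewrite h. Qed.

Lemma congX_trans p q r : congX p q -> congX q r -> congX p r.
Proof. by move=> h1 h2 i hi; rewrite h1 // h2. Qed.

Lemma congXD p p' q q' : congX p p' -> congX q q' -> congX (p + q) (p' + q').
Proof. by move=> h1 h2 i hi; rewrite !coefD h1 // h2. Qed.

Lemma congXMr p p' q : congX p p' -> congX (p * q) (p' * q).
Proof.
move=> h i hi; rewrite !coefM; apply: eq_bigr => j _.
by rewrite h // (leq_ltn_trans _ hi) // -ltnS.
Qed.

Lemma congXM p p' q q' : congX p p' -> congX q q' -> congX (p * q) (p' * q').
Proof.
move=> h1 h2; apply: congX_trans (congXMr q h1) _.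
by rewrite ![p' * _]mulrC; apply: congXMr.
Qed.

Lemma congXX p p' k : congX p p' -> congX (p ^+ k) (p' ^+ k).
Proof. by move=> h; elim: k => [|k IH]; rewrite ?expr0 // !exprS; apply: congXM. Qed.

Lemma congX_compl p p' (Q : {poly R}) :
  Q`_0 = 0 -> congX p p' -> congX (p \Po Q) (p' \Po Q).
Proof.
move=> Q0 h i hi; apply/eqP; rewrite -subr_eq0 -coefB -comp_polyB.
have -> : p - p' = drop_poly N (p - p') * 'X^N.
  rewrite -[LHS](poly_take_drop N) [take_poly _ _](_ : _ = 0) ?add0r //.
  apply/polyP=> j; rewrite coef_take_poly coefB coef0.
  by case: ifP => // /h ->; rewrite subrr.
have -> : Q = drop_poly 1 Q * 'X.
  rewrite -[LHS](poly_take_drop 1) [take_poly _ _](_ : _ = 0) ?add0r //.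
  by apply/polyP=> -[|j]; rewrite coef_take_poly ?Q0 coef0.
by rewrite comp_polyM comp_Xn_poly exprMn mulrA coefMXn hi.
Qed.

Lemma congX_compr p (Q Q' : {poly R}) : congX Q Q' -> congX (p \Po Q) (p \Po Q').
Proof.
move=> h; elim/poly_ind: p => [|p a IH]; first by rewrite !comp_poly0.
rewrite !comp_polyD !comp_polyM !comp_polyX !comp_polyC.
by apply: congXD => //; apply: congXM.
Qed.

End CongruenceModXn.

Lemma F2_cases (x : 'F_2) : x = 0 \/ x = 1.
Proof. by case: x => [[|[|]]] //= ?; [left|right]; apply/val_inj. Qed.

Lemma pchar_F2 : 2%N \in [pchar 'F_2].
Proof. exact: pchar_Fp. Qed.

Lemma F2_addr_eq0 (x y : 'F_2) : (x + y == 0) = (x == y).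
Proof. by rewrite addr_eq0 oppr_pchar2 // pchar_F2. Qed.

Lemma F2_natr_addb (a b : bool) : ((a (+) b)%:R : 'F_2) = a%:R + b%:R.
Proof. by case: a; case: b; rewrite ?addr0 ?add0r ?addrr_pchar2 ?pchar_F2. Qed.

Lemma F2_natr_eq1 (b : bool) : ((b%:R : 'F_2) = 1) <-> b.
Proof. by case: b; split => // /eqP. Qed.

Lemma pchar_F2poly : 2%N \in [pchar {poly 'F_2}].
Proof. by rewrite pchar_poly pchar_F2. Qed.

Lemma sqr_F2poly (p : {poly 'F_2}) : p ^+ 2 = p \Po 'X^2.
Proof.
elim/poly_ind: p => [|p a IH]; first by rewrite comp_poly0 expr0n.
rewrite comp_polyD comp_polyM comp_polyX comp_polyC -IH sqrrD.
rewrite mulrn_pchar ?pchar_F2poly // addr0 exprMn -polyC_exp.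
by case: (F2_cases a) => ->; rewrite ?expr0n ?expr1n.
Qed.

Lemma coef_sqr_F2poly (p : {poly 'F_2}) i :
  (p ^+ 2)`_i = if odd i then 0 else p`_i./2.
Proof. by rewrite sqr_F2poly coef_comp_poly_Xn // dvdn2 divn2; case: odd. Qed.

Lemma coef_exp4_F2poly (p : {poly 'F_2}) i :
  (p ^+ 4)`_i = if (4 %| i)%N then p`_(i %/ 4) else 0.
Proof.
have -> : p ^+ 4 = (p ^+ 2) ^+ 2 by rewrite -exprM.
rewrite (sqr_F2poly (p ^+ 2)) (sqr_F2poly p) -comp_polyA comp_Xn_poly -exprM.
by rewrite coef_comp_poly_Xn.
Qed.

Lemma s2_widen n K : (n < K)%N -> s2 n = (\sum_(i < K) odd (n %/ 2 ^ i))%N.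
Proof.
move=> ltnK; rewrite /s2.
rewrite (big_ord_widen K (fun i => nat_of_bool (odd (n %/ 2 ^ i))) ltnK).
rewrite big_mkcond /=; apply: eq_bigr => i _; case: ifP => // le_ni.
rewrite divn_small; first done.
apply: leq_trans (ltn_expl n (ltnSn 1)) _.
by apply: leq_pexp2l; rewrite // ltnW // leqNgt le_ni.
Qed.

Lemma s2_half n : s2 n = (odd n + s2 n./2)%N.
Proof.
rewrite (@s2_widen n n.+2) // big_ord_recl expn0 divn1.
rewrite (@s2_widen n./2 n.+1); last first.
  by rewrite -divn2 ltnS leq_div.
by congr (_ + _)%N; apply: eq_bigr => i _; rewrite expnS divnMA divn2.
Qed.

Lemma FserE n : Fser n = (s2 n)%:R.
Proof.
by rewrite /Fser /tm Fp_nat_mod //; case: eqP => // ->; rewrite /s2 big_ord1.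
Qed.

Definition tm_rel (x y : {poly 'F_2}) : {poly 'F_2} :=
  (1 + x + x ^+ 2 + x ^+ 3) * y ^+ 2 + (1 + x ^+ 2) * y + x.

Lemma tm_rel_trunc N : congX N.+1 (tm_rel 'X (trunc Fser N)) 0.
Proof.
move=> i; rewrite ltnS => le_iN; set T := trunc Fser N.
pose t k : 'F_2 := (s2 k)%:R.
have t_half k : t k = (odd k)%:R + t k./2 by rewrite /t s2_half natrD.
have coefT k : (k <= i)%N -> T`_k = t k.
  by move=> le_ki; rewrite coef_poly ltnS (leq_trans le_ki le_iN) FserE.
have coefT2 k : (k <= i)%N -> (T ^+ 2)`_k = if odd k then 0 else t k./2.
  move=> le_ki; rewrite coef_sqr_F2poly coefT // (leq_trans _ le_ki) //.
  by rewrite -divn2 leq_div.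
rewrite /tm_rel !mulrDl !mul1r coef0 !coefD coefXM !coefXnM coefX.
have t0 : t 0%N = 0 by rewrite /t /s2 big_ord1.
have t1 : t 1%N = 1 by rewrite t_half t0 addr0.
have t2 : t 2%N = 1 by rewrite t_half t1 add0r.
case: i le_iN coefT coefT2 => [|[|[|i]]] _ coefT coefT2 /=.
- by rewrite coefT2 ?coefT //= t0 !addr0.
- by rewrite !coefT2 ?coefT //= t0 t1 !addr0 add0r addrr_pchar2 ?pchar_F2.
- by rewrite subnn !coefT2 ?coefT //= t0 t1 t2 !addr0 addrr_pchar2 ?pchar_F2.
rewrite !subSS !subn0 !coefT2 ?coefT; [| lia..].
have [k [->|->]] : exists k, i = k.*2 \/ i = k.*2.+1.
  by exists i./2; rewrite -divn2; lia.
- rewrite [t k.*2.+3]t_half [t k.*2.+1]t_half /= !odd_double /= ?doubleK ?uphalf_double.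
  by case: (F2_cases (t k)) => ->; case: (F2_cases (t k.+1)) => ->; apply/eqP.
- rewrite [t k.*2.+4]t_half [t k.*2.+2]t_half /= !odd_double /= ?doubleK ?uphalf_double.
  by case: (F2_cases (t k.+1)) => ->; case: (F2_cases (t k.+2)) => ->; apply/eqP.
Qed.

Lemma comp_trunc (A B : fps) n : Defs.comp A B n = (trunc A n \Po trunc B n)`_n.
Proof.
rewrite coef_comp_poly /Defs.comp; symmetry.
pose F i := (trunc A n)`_i * ((trunc B n) ^+ i)`_n.
rewrite (big_ord_widen n.+1 F (size_poly _ _)).
rewrite big_mkcond /=; apply: eq_bigr => i _; rewrite [A i](_ : _ = (trunc A n)`_i).
  by case: ifP => // /negbT; rewrite -leqNgt => /(nth_default 0) ->; rewrite mul0r.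
by rewrite coef_poly ltn_ord.
Qed.

Lemma congX_trunc (B : fps) m n : (m <= n)%N -> congX m.+1 (trunc B n) (trunc B m).
Proof. by move=> le_mn i le_im; rewrite !coef_poly le_im (leq_trans le_im). Qed.

Lemma tm_rel_comp (x y Q : {poly 'F_2}) :
  tm_rel x y \Po Q = tm_rel (x \Po Q) (y \Po Q).
Proof. by rewrite /tm_rel !(comp_polyD, comp_polyM, comp_polyC, rmorphXn). Qed.

Lemma congX_tm_rel N (x y y' : {poly 'F_2}) :
  congX N y y' -> congX N (tm_rel x y) (tm_rel x y').
Proof.
by move=> e; apply: congXD => //; apply: congXD; apply: congXM => //; apply: congXX.
Qed.

Definition inv_rel (y : {poly 'F_2}) : {poly 'F_2} :=
  'X^3 * y ^+ 4 + (1 + 'X) * y + 'X + 'X^3.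

Lemma inv_relE y : inv_rel y = tm_rel y 'X * (1 + 'X + 'X * y).
Proof.
have -> : inv_rel y = tm_rel y 'X * (1 + 'X + 'X * y) - 2%:R *
    ('X^3 * y + 'X^2 + 'X^3 * y ^+ 2 + 'X^2 * y + 'X^3 * y ^+ 3 + 'X^2 * y ^+ 2
     + 'X^2 * y ^+ 3 + 'X * y ^+ 2).
  by rewrite /inv_rel /tm_rel; ring.
by rewrite mulrn_pchar ?pchar_F2poly // mul0r subr0.
Qed.

Section IncreasingSequences.
Local Open Scope nat_scope.

Lemma incr_seq_eq (f g : nat -> nat) :
  {homo f : m n / m < n} -> {homo g : m n / m < n} -> f 0 = g 0 ->
  (forall m, 0 < m -> (exists2 n, 0 < n & f n = m) <-> (exists2 n, 0 < n & g n = m)) ->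
  f =1 g.
Proof.
have leq_succ (u v : nat -> nat) n : {homo u : m n / m < n} -> {homo v : m n / m < n} ->
    (forall m, 0 < m -> (exists2 k, 0 < k & v k = m) -> exists2 k, 0 < k & u k = m) ->
    {in gtn n.+1, u =1 v} -> u n.+1 <= v n.+1.
  move=> u_incr v_incr vu eq_uv; rewrite leqNgt; apply/negP => lt_vu.
  have [|k _ ek] := vu (v n.+1) _ (ex_intro2 _ _ n.+1 isT erefl).
    exact: leq_ltn_trans (leq0n _) (v_incr 0 n.+1 isT).
  have lt_kn : k < n.+1 by rewrite -(leqW_mono (leq_mono u_incr)) ek.
  move: ek; rewrite eq_uv // => /(incn_inj (leq_mono v_incr)) ek.
  by rewrite ek ltnn in lt_kn.
move=> f_incr g_incr eq0 same; elim/ltn_ind => -[// | n] IH.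
apply/eqP; rewrite eqn_leq !leq_succ //.
- by move=> m m_gt0 /(same m m_gt0).
- by move=> i /IH ->.
- by move=> m m_gt0 /(same m m_gt0).
Qed.

(* [ones n] is the explicit sequence a_n of the proof sketch above. *)
Fixpoint ones_fuel (fuel n : nat) : nat :=
  if fuel is k.+1 then
    if n < 3 then n else 4 * ones_fuel k ((n - 3) %/ 4).*2.+1 + 3 + (n - 3) %% 4
  else n.

Definition ones (n : nat) : nat := ones_fuel n n.

Lemma ones_fuel_enough k l n : n <= k -> n <= l -> ones_fuel k n = ones_fuel l n.
Proof.
elim: k l n => [|k IH] [|l] n le_nk le_nl //=.
- by move: le_nk; rewrite leqn0 => /eqP ->.
- by move: le_nl; rewrite leqn0 => /eqP ->.
by case: ifP => // ge_n3; congr (4 * _ + _ + _); apply: IH; lia.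
Qed.

Lemma block_decomp n : 2 < n -> exists j r, r < 4 /\ n = 4 * j + 3 + r.
Proof. by exists ((n - 3) %/ 4), ((n - 3) %% 4); lia. Qed.

Lemma ones_small n : n < 3 -> ones n = n.
Proof. by rewrite /ones; case: n => //= n ->. Qed.

Lemma ones_block j r : r < 4 -> ones (4 * j + 3 + r) = 4 * ones j.*2.+1 + 3 + r.
Proof.
move=> lt_r4; have -> : 4 * j + 3 + r = (4 * j + 2 + r).+1 by lia.
rewrite {1}/ones /= ifF; last by lia.
have -> : ((4 * j + 2 + r).+1 - 3) %/ 4 = j by lia.
have -> : ((4 * j + 2 + r).+1 - 3) %% 4 = r by lia.
by congr (4 * _ + _ + _); apply: ones_fuel_enough; rewrite ?leqnn; lia.
Qed.

Lemma ones_pair j : ones j.*2.+2 = (ones j.*2.+1).+1.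
Proof.
case: j => [|j]; first by rewrite !ones_small.
have e : j.+1.*2.+1 = 4 * j./2 + 3 + (odd j).*2.
  by rewrite -[in LHS](odd_double_half j) doubleS doubleD; case: odd; lia.
have lt_r4 : (odd j).*2 < 4 by case: odd.
by rewrite -[j.+1.*2.+2]/(j.+1.*2.+1).+1 e -addnS !ones_block // ?addnS; case: odd.
Qed.

Lemma ones_ltS n : ones n < ones n.+1.
Proof.
elim/ltn_ind: n => n IH.
case: (ltnP n 3) => [lt_n3 | ge_n3]; first by case: n {IH} lt_n3 => [|[|[|]]].
have [j [r [lt_r4 en]]] := block_decomp ge_n3.
case: (ltnP r 3) => [lt_r3 | ge_r3]; first by rewrite en -addnS !ones_block //; lia.
have -> : n.+1 = 4 * j.+1 + 3 + 0 by lia.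
have lt1 : ones j.*2.+1 < ones j.*2.+2 by apply: IH; lia.
have lt2 : ones j.*2.+2 < ones j.*2.+3 by apply: IH; lia.
by rewrite en !ones_block // -[j.+1.*2.+1]/j.*2.+3; lia.
Qed.

Lemma ones_incr : {homo ones : m n / m < n}.
Proof. exact: homo_ltn ltn_trans ones_ltS. Qed.

Lemma ones_inj : injective ones.
Proof. exact: incn_inj (leq_mono ones_incr). Qed.

Lemma leq_ones n : n <= ones n.
Proof. by elim: n => // n IH; exact: leq_ltn_trans IH (ones_ltS n). Qed.

Definition is_one (m : nat) : bool := m \in [seq ones n | n <- iota 1 m].

Lemma is_oneP m : reflect (exists2 n, 0 < n & ones n = m) (is_one m).
Proof.
apply: (iffP mapP) => [[n] | [n n_gt0 <-]].
  by rewrite mem_iota => /andP[n_gt0 _] ->; exists n.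
by exists n; rewrite // mem_iota n_gt0 add1n ltnS leq_ones.
Qed.

Definition is_first (m : nat) : bool := m \in [seq ones j.*2.+1 | j <- iota 0 m].

Lemma is_firstP m : reflect (exists j, ones j.*2.+1 = m) (is_first m).
Proof.
apply: (iffP mapP) => [[j _ ->] | [j <-]]; first by exists j.
exists j; rewrite // mem_iota add0n (leq_trans _ (leq_ones _)) //.
by rewrite ltnS -addnn leq_addr.
Qed.

Lemma is_first_succ q : is_first q.+1 = is_first q (+) is_one q.+1.
Proof.
have odd_neq i j : i.*2.+2 <> j.*2.+1 by move/(congr1 odd); rewrite /= !odd_double.
case: (is_oneP q.+1) => [[[//|n] _ e] | no_one]; rewrite ?addbT ?addbF.
- have [j [en|en]] : exists j, n = j.*2 \/ n = j.*2.+1.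
    by exists n./2; rewrite -divn2; lia.
  + have -> : is_first q.+1 by apply/is_firstP; exists j; rewrite -en.
    apply/esym/negP => /is_firstP[i ei].
    by move: e; rewrite en -ei -ones_pair => /ones_inj/esym/odd_neq.
  + have -> : is_first q.
      by apply/is_firstP; exists j; apply: succn_inj; rewrite -ones_pair -en.
    apply/negP => /is_firstP[i ei].
    by move: e; rewrite en -ei => /ones_inj/odd_neq.
- apply/idP/idP => /is_firstP[i ei]; case: no_one; first by exists i.*2.+1.
  by exists i.*2.+2; rewrite // ones_pair ei.
Qed.

Lemma is_one_block q r : r < 4 -> is_one (4 * q + 3 + r) = is_first q.
Proof.
move=> lt_r4; apply/is_oneP/is_firstP => [[n _ e] | [j <-]]; last first.
  by exists (4 * j + 3 + r); rewrite ?ones_block //; lia.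
case: (ltnP n 3) => [lt_n3 | ge_n3]; first by move: e; rewrite ones_small //; lia.
have [j [r' [lt_r'4 en]]] := block_decomp ge_n3.
by exists j; move: e; rewrite en ones_block //; lia.
Qed.

Lemma ones_rec n : 0 < n ->
  [/\ ones (4 * n) = ones (4 * n - 1) + 1,
      ones (4 * n + 1) = ones (4 * n - 1) + 2,
      ones (4 * n + 2) = ones (4 * n - 1) + 3,
      ones (8 * n + 3) = ones (8 * n) + 7 &
      ones (8 * n + 7) = 4 * ones (4 * n + 3) + 3].
Proof.
case: n => // k _.
have blk i j r : i = 4 * j + 3 + r -> r < 4 -> ones i = 4 * ones j.*2.+1 + 3 + r.
  by move=> ->; apply: ones_block.
have o3 : ones (4 * k.+1 - 1) = 4 * ones k.*2.+1 + 3 by rewrite (blk _ k 0) //; lia.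
split.
- by rewrite o3 (blk _ k 1) //; lia.
- by rewrite o3 (blk _ k 2) //; lia.
- by rewrite o3 (blk _ k 3) //; lia.
- rewrite (blk _ k.*2.+2 0) ?(blk (8 * k.+1) k.*2.+1 1) ?(blk k.*2.+2.*2.+1 k 2)
    ?(blk k.*2.+1.*2.+1 k 0) //; lia.
- by rewrite (blk _ k.*2.+3 0) ?(blk (k.*2.+3).*2.+1 k.+1 0)
    ?(blk (4 * k.+1 + 3) k.+1 0); lia.
Qed.

End IncreasingSequences.

Section CompositionalInverse.
Variable c : fps.
Hypothesis c_inv : comp_inverse Fser c.

Lemma inv_rel_trunc N : congX N.+1 (inv_rel (trunc c N)) 0.
Proof.
have [c0 [FcX _]] := c_inv; set Q := trunc c N; set T := trunc Fser N.
have Q0 : Q`_0 = 0 by rewrite coef_poly c0.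
have TQ : congX N.+1 (T \Po Q) 'X.
  move=> i; rewrite ltnS => le_iN.
  have := congX_trans (congX_compl Q0 (congX_trunc Fser le_iN))
                      (congX_compr _ (congX_trunc c le_iN)).
  by move/(_ i (ltnSn i)) ->; rewrite -comp_trunc FcX coefX /Xser; case: eqP.
have := congX_compl Q0 (tm_rel_trunc (N := N)).
rewrite comp_poly0 tm_rel_comp comp_polyX => rel0.
rewrite inv_relE -(mul0r (1 + 'X + 'X * Q)); apply: congXMr.
exact: congX_trans (congX_tm_rel _ (congX_sym TQ)) rel0.
Qed.

Lemma c_rel_coef i :
  (if (i < 3)%N then 0 else if (4 %| i - 3)%N then c ((i - 3) %/ 4)%N else 0)
  + (c i + (if i == 0%N then 0 else c i.-1)) + (i == 1)%:R + (i == 3)%:R = 0.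
Proof.
have coefQ k : (k <= i)%N -> (trunc c i)`_k = c k.
  by move=> le_ki; rewrite coef_poly ltnS le_ki.
have := inv_rel_trunc (N := i) (ltnSn i).
rewrite /inv_rel mulrDl mul1r coef0 !coefD coefXnM coef_exp4_F2poly coefXM coefX coefXn.
rewrite coefQ ?(leq_trans (leq_div _ _)) ?leq_subr // coefQ //.
by case: eqP => // _; rewrite coefQ // leq_pred.
Qed.

Lemma c_init : [/\ c 1 = 1, c 2 = 1 & c 3 = 0].
Proof.
have [c0 _] := c_inv.
have := c_rel_coef 1; have := c_rel_coef 2; have := c_rel_coef 3.
rewrite /= c0 !add0r !addr0.
move=> /eqP; rewrite -addrA F2_addr_eq0 => /eqP c3E.
move=> /eqP; rewrite F2_addr_eq0 => /eqP c2E.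
move=> /eqP; rewrite F2_addr_eq0 => /eqP c1E.
by rewrite c3E c2E c1E addrr_pchar2 ?pchar_F2.
Qed.

Lemma c_rec m : c m.+4 = c m.+3 + (if (4 %| m.+1)%N then c (m.+1 %/ 4)%N else 0).
Proof.
have := c_rel_coef m.+4; rewrite /= !subSS subn0 !addr0 addrC -addrA.
by move=> /eqP; rewrite F2_addr_eq0 => /eqP.
Qed.

Lemma c_block q r : (r < 4)%N -> c (4 * q + 3 + r)%N = c (4 * q + 3)%N.
Proof.
elim: r => [|r IH] lt_r4; first by rewrite addn0.
have -> : (4 * q + 3 + r.+1 = (4 * q + r).+4)%N by lia.
rewrite c_rec ifF; last by apply/negP => /dvdnP[k]; lia.
by rewrite addr0 -(IH (ltnW lt_r4)); congr c; lia.
Qed.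

Lemma c_block_succ q : c (4 * q.+1 + 3)%N = c (4 * q + 3)%N + c q.+1.
Proof.
have -> : (4 * q.+1 + 3 = (4 * q + 3).+4)%N by lia.
rewrite c_rec ifT; last by apply/dvdnP; exists q.+1; lia.
have -> : ((4 * q + 3).+1 %/ 4 = q.+1)%N by lia.
by rewrite -(c_block q (ltnSn 3)); congr (c _ + _); lia.
Qed.

Lemma c_first q : (forall k, (0 < k <= q)%N -> c k = (is_one k)%:R) ->
  c (4 * q + 3)%N = (is_first q)%:R.
Proof.
elim: q => [|q IH] c_le; first by have [_ _ ->] := c_init.
rewrite c_block_succ IH => [|k /andP[k_gt0 le_kq]]; last by rewrite c_le ?k_gt0 ?leqW.
by rewrite c_le ?leqnn // is_first_succ F2_natr_addb.
Qed.

Lemma c_ones m : (0 < m)%N -> c m = (is_one m)%:R.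
Proof.
elim/ltn_ind: m => m IH m_gt0; have [c1 c2 _] := c_init.
case: (ltnP m 3) => [lt_m3 | ge_m3].
  by case: m {IH} m_gt0 lt_m3 => [|[|[|]]].
have [q [r [lt_r4 em]]] := block_decomp ge_m3.
rewrite em c_block // is_one_block // c_first // => k /andP[k_gt0 le_kq].
by apply: IH => //; lia.
Qed.

End CompositionalInverse.

Theorem mainTheorem6 (c : fps) (a : nat -> nat) :
  comp_inverse Fser c -> enumerates c a ->
  [/\ a 1 = 1, a 2 = 2, a 3 = 7 &
   forall n, 1 <= n ->
   [/\ a (4 * n) = a (4 * n - 1) + 1,
       a (4 * n + 1) = a (4 * n - 1) + 2,
       a (4 * n + 2) = a (4 * n - 1) + 3,
       a (8 * n + 3) = a (8 * n) + 7 &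
       a (8 * n + 7) = 4 * a (4 * n + 3) + 3]]%N.
Proof.
move=> c_inv [a0 [a_ltS a_ones]].
have a_eq : a =1 ones.
  apply: incr_seq_eq (homo_ltn ltn_trans a_ltS) ones_incr a0 _ => m m_gt0.
  apply: iff_trans (iff_sym (a_ones m m_gt0)) _.
  apply: iff_trans _ (iff_sym (rwP (is_oneP m))).
  by rewrite c_ones // F2_natr_eq1.
by rewrite !a_eq; split=> // n n_gt0; rewrite !a_eq; apply: ones_rec.
Qed.
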